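(* Let $n\ge0$. For all $i,j\in\{1,\dots,\widetilde\mu_n\}$, the $(i,j)$-entry of $\chi^{(n)}$ is $$\chi^{(n)}_{i,j}=\frac{1}{d_n}\sum_{a=1}^{d_n}p_n\!\left(\mathbf{e}\!\left[\frac{a}{d_n}\right]\right)\mathbf{e}\!\left[\frac{a}{d_n}(i-j)\right].$$
   Context: Fix integers $a_1,a_2,\ldots\ge2$, $d_0=1$, $d_i=a_1\cdots a_i$, $\widetilde\mu_n=\sum_{i=0}^n(-1)^{n-i}d_i$, $\mathbf{e}[\alpha]=\exp(2\pi\sqrt{-1}\alpha)$. $\chi^{(n)}$ is the $\widetilde\mu_n\times\widetilde\mu_n$ matrix $1/\varphi_n(N)$, where $N=(\delta_{i+1,j})$ is the nilpotent shift matrix and $\varphi_n(t)=\prod_{i=0}^n(1-t^{d_i})^{(-1)^{n-i}}$ for $n\ge1$, $\varphi_0(t)=1-t$ (expand $1/\varphi_n(t)$ as a power series in $t$ and substitute $N$). $p_n(t)=\prod_{i=1}^n(1-t^{d_{i-1}})^{(-1)^{n-i}}$ for $n\ge1$ and $p_0(t)=1$; $p_n$ is a polynomial. *)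

From HB Require Import structures.
From mathcomp Require Import all_boot all_order all_algebra.
From mathcomp Require Import reals trigo.
From mathcomp Require Import complex.
Set Implicit Arguments. Unset Strict Implicit. Unset Printing Implicit Defensive.
Import Order.TTheory GRing.Theory Num.Theory.
Local Open Scope ring_scope.

Definition dd (a : nat -> nat) (i : nat) : nat := (\prod_(1 <= k < i.+1) a k)%N.

Definition mut (a : nat -> nat) (n : nat) : int :=
  \sum_(i < n.+1) (-1) ^+ (n - i) * (dd a i)%:Z.

(* mu~_n as a natural number (it is positive under the hypotheses a_k >= 2) *)
Definition mu (a : nat -> nat) (n : nat) : nat := `|mut a n|%N.

Definition ps := nat -> int.
Definition ps_one : ps := fun k => (k == 0%N)%:Z.
Definition ps_mul (f g : ps) : ps := fun k => \sum_(m < k.+1) f m * g (k - m)%N.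
Definition ps_1mX (d : nat) : ps := fun k => (k == 0%N)%:Z - (k == d)%:Z.
(* the power series expansion of (1 - t^d)^(-1) = sum_k t^(d k)  (d >= 1) *)
Definition ps_geom (d : nat) : ps := fun k => (d %| k)%:Z.

(* power series expansion of 1/phi_n(t) = prod_{i=0}^n (1 - t^{d_i})^(-(-1)^(n-i)) *)
Definition inv_phi (a : nat -> nat) (n : nat) : ps :=
  \big[ps_mul/ps_one]_(i < n.+1)
     (if odd (n - i) then ps_1mX (dd a i) else ps_geom (dd a i)).

Definition shiftN (C : pzRingType) (m : nat) : 'M[C]_m :=
  \matrix_(i < m, j < m) ((i.+1 == j :> nat)%:R).

(* chi^(n) = 1/phi_n(N): substitute N into the power series; N^k = 0 for k >= mu~_n,
   so the substitution is the finite sum over k < mu~_n *)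
Definition chi (C : pzRingType) (a : nat -> nat) (n : nat) : 'M[C]_(mu a n) :=
  \sum_(k < mu a n) (inv_phi a n k)%:~R *: (shiftN C (mu a n)) ^+ k.

(* p_n(t) = prod_{i=1}^n (1 - t^{d_{i-1}})^((-1)^(n-i)), a polynomial:
   numerator (n-i even) divided (exactly) by denominator (n-i odd) *)
Definition p_num (F : fieldType) (a : nat -> nat) (n : nat) : {poly F} :=
  \prod_(1 <= i < n.+1 | ~~ odd (n - i)) (1 - 'X^(dd a i.-1)).
Definition p_den (F : fieldType) (a : nat -> nat) (n : nat) : {poly F} :=
  \prod_(1 <= i < n.+1 | odd (n - i)) (1 - 'X^(dd a i.-1)).
Definition pp (F : fieldType) (a : nat -> nat) (n : nat) : {poly F} :=
  p_num F a n %/ p_den F a n.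

Definition ee (R : realType) (x : R) : R[i] :=
  Complex (cos (2 * pi * x)) (sin (2 * pi * x)).

(* Since [phi_n(t) = (1 - t^(d_n)) / p_n(t)], the matrix [chi^(n) = 1/phi_n(N)] is the
   upper triangular Toeplitz matrix of the coefficients of
   [p_n(t) / (1 - t^(d_n)) = p_n(t) (1 + t^(d_n) + t^(2 d_n) + ...)].  As [p_n] has degree
   [d_n - mu~_n], its [(i, j)] entry is the sum of the coefficients [c_m] of [p_n] with
   [m + i - j = 0 (mod d_n)], and no such [m] exists below the diagonal, where
   [0 < m + i - j < d_n].  The right-hand side is the same sum, by orthogonality of the
   [d_n]-th roots of unity: [sum_(b = 1..d) e[b s / d] = d] if [d | s] and [0] otherwise. *)

From HB Require Import structures.
From mathcomp Require Import all_boot all_order all_algebra.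
From mathcomp Require Import reals trigo.
From mathcomp Require Import complex.
From mathcomp Require Import ring lra zify.
Import Order.TTheory GRing.Theory Num.Theory.
Local Open Scope ring_scope.
Set Implicit Arguments.
Unset Strict Implicit.

Section RootsOfUnity.
Variable R : realType.
Implicit Types (x y : R) (s : int).

Lemma eeD x y : ee (x + y) = ee x * ee y.
Proof.
rewrite /ee !mulrDr cosD sinD [RHS]/GRing.mul /=.
by congr Complex; ring.
Qed.

Lemma ee0 : ee (0 : R) = 1.
Proof. by rewrite /ee mulr0 cos0 sin0. Qed.

Lemma ee_natmul (b : nat) y : ee (b%:R * y) = ee y ^+ b.
Proof.
elim: b => [|b IH]; first by rewrite mul0r ee0.
by rewrite mulrSr mulrDl mul1r eeD IH exprSr.
Qed.

Lemma ee_int s : ee (s%:~R : R) = 1.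
Proof.
have ee_nat (m : nat) : ee (m%:R : R) = 1.
  by rewrite -[m%:R]mulr1 ee_natmul /ee mulr1 mulr_natl cos2pi sin2pi expr1n.
case: s => m; first exact: ee_nat.
by rewrite NegzE mulrNz -[LHS]mulr1 -{1}(ee_nat m.+1) -eeD addNr ee0.
Qed.

Lemma ee_neq1 x : 0 < x < 1 -> ee x != 1.
Proof.
move=> /andP[x_gt0 x_lt1]; apply/negP => /eqP [] cos1 sin0.
have pi_pos := @pi_gt0 R.
have [lt_pi|gt_pi|eq_pi] := ltgtP (2 * pi * x) pi.
- have : 0 < sin (2 * pi * x) by apply: sin_gt0_pi; apply/andP; split; nra.
  by rewrite sin0 ltxx.
- have : 0 < - sin (2 * pi * x).
    rewrite -[X in sin X](subrK pi) sinDpi opprK.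
    by apply: sin_gt0_pi; apply/andP; split; nra.
  by rewrite sin0 oppr0 ltxx.
- by move: cos1; rewrite eq_pi cospi => /eqP; lra.
Qed.

Lemma sum_ee_roots (D : nat) s : (0 < D)%N ->
  \sum_(1 <= b < D.+1) ee ((b%:R / D%:R) * s%:~R : R) = ((D%:Z %| s)%Z * D)%:R.
Proof.
move=> D_gt0; have DR : (D%:R : R) != 0 by rewrite pnatr_eq0 -lt0n.
set w := ee (s%:~R / D%:R : R).
under eq_bigr => b _ do rewrite mulrAC -mulrA ee_natmul -/w.
have [Ds|nDs] := boolP (D%:Z %| s)%Z.
  have -> : w = 1 by case/dvdzP: Ds => q s_eq; rewrite /w s_eq rmorphM /= -pmulrn mulfK // ee_int.
  under eq_bigr => b _ do rewrite expr1n.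
  by rewrite sumr_const_nat subn1 mul1n.
have wD : w ^+ D = 1 by rewrite -ee_natmul mulrC mulfVK // ee_int.
have w1 : w != 1.
  rewrite /w (divz_eq s D%:Z) rmorphD rmorphM /= mulrDl mulfK // eeD ee_int mul1r.
  have r0 : (0 <= s %% D%:Z)%Z by apply: modz_ge0; rewrite eqz_nat -lt0n.
  have rD : (s %% D%:Z < D%:Z)%Z by apply: ltz_pmod; lia.
  have rn0 : (s %% D%:Z)%Z != 0 by apply: contra nDs => /eqP/dvdz_mod0P.
  apply: ee_neq1; apply/andP; split.
    by apply: divr_gt0; rewrite ?ltr0n // ltr0z lt_neqAle eq_sym rn0.
  by rewrite ltr_pdivrMr ?ltr0n // mul1r [D%:R]pmulrn ltr_int.
rewrite [RHS]/= big_add1 /= big_mkord.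
have -> : \sum_(b < D) w ^+ b.+1 = w * \sum_(b < D) w ^+ b.
  by rewrite mulr_sumr; under [RHS]eq_bigr do rewrite -exprS.
have : (w - 1) * \sum_(b < D) w ^+ b = 0 by rewrite -subrX1 wD subrr.
by move/eqP; rewrite mulf_eq0 subr_eq0 (negbTE w1) => /eqP ->; rewrite mulr0.
Qed.

End RootsOfUnity.

Section Degrees.
Variable a : nat -> nat.
Hypothesis a_ge2 : forall k, (1 <= k)%N -> (2 <= a k)%N.

Lemma ddS n : dd a n.+1 = (dd a n * a n.+1)%N.
Proof. by rewrite /dd big_nat_recr. Qed.

Lemma dd_gt0 n : (0 < dd a n)%N.
Proof.
elim: n => [|n IH]; first by rewrite /dd big_geq.
by rewrite ddS muln_gt0 IH ltnW ?a_ge2.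
Qed.

Lemma mu0 : mu a 0 = 1%N.
Proof. by rewrite /mu /mut big_ord1 /dd big_geq. Qed.

Lemma dd_dvdS n : (dd a n %| dd a n.+1)%N.
Proof. by rewrite ddS dvdn_mulr. Qed.

Lemma mutS n : mut a n.+1 = (dd a n.+1)%:Z - mut a n.
Proof.
rewrite /mut big_ord_recr /= subnn expr0 mul1r addrC; congr (_ + _).
rewrite -sumrN; apply: eq_bigr => i _.
by rewrite subSn ?(leq_ord i) // exprS mulN1r mulNr.
Qed.

(* [d_(n+1) >= 2 d_n] keeps the alternating sum [mut] positive. *)
Lemma mut_gt0 n : (0 < mut a n <= (dd a n)%:Z)%R.
Proof.
elim: n => [|n IH]; first by rewrite /mut big_ord1 /dd big_geq.
have ddS2 : (2 * dd a n <= dd a n.+1)%N by rewrite ddS mulnC leq_mul2l a_ge2 ?orbT.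
rewrite mutS; have := dd_gt0 n; lia.
Qed.

Lemma mu_mut n : (mu a n)%:Z = mut a n.
Proof. by rewrite /mu gez0_abs // ltW //; case/andP: (mut_gt0 n). Qed.

Lemma muS n : (mu a n.+1 + mu a n)%N = dd a n.+1.
Proof. by apply/eqP; rewrite -eqz_nat PoszD !mu_mut mutS subrK. Qed.

End Degrees.

Lemma size_1subXn (R : nzRingType) (d : nat) :
  (0 < d)%N -> size (1 - 'X^d : {poly R}) = d.+1.
Proof. by move=> d0; rewrite -opprB size_polyN -polyC1 size_XnsubC. Qed.

Lemma dvdp_1subXn (R : idomainType) (m l : nat) :
  (m %| l)%N -> (1 - 'X^m : {poly R}) %| 1 - 'X^l.
Proof.
by case/dvdnP => k ->; rewrite mulnC exprM -[1 - _ ^+ k]opprB subrX1 -mulNr opprB dvdp_mulIl.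
Qed.

Section QuotientPolynomial.
Variable F : fieldType.
Variable a : nat -> nat.
Hypothesis a_ge2 : forall k, (1 <= k)%N -> (2 <= a k)%N.

Lemma p_numE n : p_num F a n = \prod_(0 <= i < n | odd (n - i)) (1 - 'X^(dd a i)).
Proof.
rewrite /p_num big_add1 /= big_mkcond [RHS]big_mkcond.
by apply: eq_big_nat => i /andP[_ lt_in]; rewrite -(subnSK lt_in).
Qed.

Lemma p_denE n : p_den F a n = \prod_(0 <= i < n | ~~ odd (n - i)) (1 - 'X^(dd a i)).
Proof.
rewrite /p_den big_add1 /= big_mkcond [RHS]big_mkcond.
by apply: eq_big_nat => i /andP[_ lt_in]; rewrite -(subnSK lt_in) /= negbK.
Qed.

Lemma p_numS n : p_num F a n.+1 = p_den F a n * (1 - 'X^(dd a n)).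
Proof.
rewrite p_numE p_denE big_mkcond big_nat_recr //= subSnn /= [in RHS]big_mkcond.
by congr (_ * _); apply: eq_big_nat => i /andP[_ lt_in]; rewrite (subSn (ltnW lt_in)).
Qed.

Lemma p_denS n : p_den F a n.+1 = p_num F a n.
Proof.
rewrite p_denE p_numE big_mkcond big_nat_recr //= subSnn /= mulr1 [RHS]big_mkcond.
by apply: eq_big_nat => i /andP[_ lt_in]; rewrite (subSn (ltnW lt_in)) /= negbK.
Qed.

(* Writing [p_num n = Q_n * p_den n], the recurrences give [Q_n * Q_(n+1) = 1 - X^(d_n)],
   so each [Q_n] divides [1 - X^(d_n)], hence [1 - X^(d_(n+1))]. *)
Lemma p_num_factor n : exists Q : {poly F},
  [/\ p_num F a n = Q * p_den F a n, Q %| 1 - 'X^(dd a n)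
    & (size Q + mu a n)%N = (dd a n).+1].
Proof.
elim: n => [|n [Q [numQ dvdQ sizeQ]]].
  exists 1; rewrite mul1r mu0 /dd big_geq // size_poly1 dvd1p.
  by split=> //; rewrite /p_num /p_den !big_geq.
have dn_gt0 := dd_gt0 a_ge2 n.
case/dvdpP: dvdQ => c def_1subX; exists c.
have cQ_neq0 : c * Q != 0 by rewrite -def_1subX -size_poly_gt0 size_1subXn.
have [c_neq0 Q_neq0] : c != 0 /\ Q != 0 by apply/andP; rewrite -negb_or -mulf_eq0.
split.
- by rewrite p_numS p_denS numQ def_1subX mulrCA [Q * _]mulrC.
- by apply: dvdp_trans (dvdp_1subXn _ (dd_dvdS a n)); rewrite def_1subX dvdp_mulIl.
- have := size_1subXn F dn_gt0; rewrite def_1subX size_mul //.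
  rewrite -!size_poly_gt0 in c_neq0 Q_neq0; have := muS a_ge2 n.
  set sc := size c; set sQ := size Q; lia.
Qed.

End QuotientPolynomial.

Section Truncation.
Variables (R : nzRingType) (K : nat).
Implicit Types (p q : {poly R}) (f : ps).

Definition eq_upto p q := forall k, (k < K)%N -> p`_k = q`_k.

Definition ps_trunc f : {poly R} := \poly_(k < K) (f k)%:~R.

Lemma eq_upto_refl p : eq_upto p p.
Proof. by []. Qed.

Lemma eq_upto_mul p1 q1 p2 q2 :
  eq_upto p1 q1 -> eq_upto p2 q2 -> eq_upto (p1 * p2) (q1 * q2).
Proof.
move=> eq1 eq2 k k_lt; rewrite !coefM; apply: eq_bigr => j _.
by rewrite eq1 ?eq2 //; have := ltn_ord j; lia.
Qed.

Lemma eq_upto_prod (I : Type) (r : seq I) (P : pred I) (G1 G2 : I -> {poly R}) :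
  (forall i, P i -> eq_upto (G1 i) (G2 i)) ->
  eq_upto (\prod_(i <- r | P i) G1 i) (\prod_(i <- r | P i) G2 i).
Proof. by move=> eqG; apply: big_ind2 => //; apply: eq_upto_mul. Qed.

Lemma coef_ps_prod (I : Type) (r : seq I) (P : pred I) (G : I -> ps) k :
  (k < K)%N ->
  ((\big[ps_mul/ps_one]_(i <- r | P i) G i) k)%:~R =
  (\prod_(i <- r | P i) ps_trunc (G i))`_k.
Proof.
move: k; apply: (big_ind2 (fun (f : ps) p => forall k, (k < K)%N -> (f k)%:~R = p`_k)).
- by move=> k _; rewrite coef1 -pmulrn.
- move=> f1 p1 f2 p2 eq1 eq2 k k_lt; rewrite coefM rmorph_sum /=.
  apply: eq_bigr => j _; rewrite intrM eq1 ?eq2 //; have := ltn_ord j; lia.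
- by move=> i _ k k_lt; rewrite coef_poly k_lt.
Qed.

Lemma ps_trunc_1subXn d : eq_upto (ps_trunc (ps_1mX d)) (1 - 'X^d).
Proof.
by move=> k k_lt; rewrite coef_poly k_lt coefB coef1 coefXn intrB -!pmulrn.
Qed.

Lemma mul_1subXn_ps_geom d : (0 < d)%N -> eq_upto ((1 - 'X^d) * ps_trunc (ps_geom d)) 1.
Proof.
move=> d_gt0 k k_lt; rewrite mulrBl mul1r coefB coefXnM coef1 !coef_poly k_lt.
case: ltnP => [k_lt_d|d_le_k].
  rewrite subr0 /ps_geom -pmulrn.
  by case: k k_lt k_lt_d => [|k] _ k_lt_d; rewrite ?dvdn0 ?gtnNdvd.
rewrite ifT; last by lia.
by rewrite /ps_geom dvdn_subl // subrr gtn_eqF // (leq_trans d_gt0).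
Qed.

End Truncation.

Section InversePhi.
Variable F : fieldType.
Variable a : nat -> nat.
Hypothesis a_ge2 : forall k, (1 <= k)%N -> (2 <= a k)%N.

Lemma p_den_neq0 n : p_den F a n != 0.
Proof.
rewrite p_denE prodf_seq_neq0; apply/allP => i _; apply/implyP => _.
by rewrite -size_poly_gt0 size_1subXn ?dd_gt0.
Qed.

Lemma pp_spec n :
  p_num F a n = pp F a n * p_den F a n /\ (size (pp F a n) + mu a n)%N = (dd a n).+1.
Proof.
have [Q [numQ _ sizeQ]] := p_num_factor F a_ge2 n.
by rewrite /pp numQ mulpK ?p_den_neq0.
Qed.

(* [1 / phi_n = p_n / (1 - t^(d_n))]: in the product defining [inv_phi], the factors
   [1 - t^(d_i)] with [n - i] odd make up [p_num n = p_n * p_den n], and the geometric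
   series with [i < n] and [n - i] even cancel [p_den n]. *)
Lemma coef_inv_phi K n k : (k < K)%N ->
  ((inv_phi a n k)%:~R : F) = (pp F a n * ps_trunc F K (ps_geom (dd a n)))`_k.
Proof.
move=> k_lt; set G := fun i => ps_trunc F K (ps_geom (dd a i)).
set E := fun i => if odd (n - i) then 1 - 'X^(dd a i) else G i.
have inv_phiE : eq_upto K (\prod_(i < n.+1) ps_trunc F K
    (if odd (n - i) then ps_1mX (dd a i) else ps_geom (dd a i))) (\prod_(i < n.+1) E i).
  apply: eq_upto_prod => i _; rewrite /E; case: odd; first exact: ps_trunc_1subXn.
  by [].
have denG : eq_upto K (p_den F a n * \prod_(0 <= i < n | ~~ odd (n - i)) G i) 1.
  have one_prod : 1 = \prod_(0 <= i < n | ~~ odd (n - i)) (1 : {poly F}) by rewrite big1_eq.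
  rewrite p_denE -big_split [X in eq_upto _ _ X]one_prod.
  by apply: eq_upto_prod => i _; apply: mul_1subXn_ps_geom; apply: dd_gt0.
rewrite /inv_phi (coef_ps_prod F _ _ _ k_lt) inv_phiE // -(big_mkord xpredT E) big_nat_recr //=.
rewrite {2}/E subnn (bigID (fun i => odd (n - i))) /=.
have -> : \prod_(0 <= i < n | odd (n - i)) E i = p_num F a n.
  by rewrite p_numE; apply: eq_bigr => i odd_i; rewrite /E odd_i.
have -> : \prod_(0 <= i < n | ~~ odd (n - i)) E i = \prod_(0 <= i < n | ~~ odd (n - i)) G i.
  by apply: eq_bigr => i even_i; rewrite /E (negbTE even_i).
rewrite (pp_spec n).1 -(mulrA (pp F a n)).
have := eq_upto_mul (eq_upto_mul (eq_upto_refl (pp F a n)) denG) (eq_upto_refl (G n)).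
by rewrite mulr1 => ->.
Qed.

End InversePhi.

Section ShiftMatrix.
Variables (C : pzRingType) (m : nat).

Lemma shiftN_expE k (i j : 'I_m) : (shiftN C m ^+ k) i j = ((i + k)%N == j)%:R.
Proof.
elim: k i => [|k IH] i; first by rewrite expr0 mxE addn0.
rewrite exprS -mulmxE mxE; under eq_bigr => l _ do rewrite IH mxE.
have [Si_lt|m_le_Si] := ltnP i.+1 m.
  rewrite (bigD1 (Ordinal Si_lt)) //= eqxx mul1r addSnnS big1 ?addr0 // => l l_neq.
  by move: l_neq; rewrite -val_eqE eq_sym => /negbTE ->; rewrite mul0r.
rewrite big1 => [|l _]; last by rewrite gtn_eqF ?mul0r // (leq_trans (ltn_ord l)).
by rewrite gtn_eqF //; have := ltn_ord j; lia.
Qed.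

Lemma shiftN_series_entry (c : nat -> C) (i j : 'I_m) :
  (\sum_(k < m) c k *: shiftN C m ^+ k) i j = if (i <= j)%N then c (j - i)%N else 0.
Proof.
rewrite summxE; under eq_bigr => k _ do rewrite mxE shiftN_expE.
have [i_le_j|j_lt_i] := leqP i j; last first.
  by rewrite big1 // => k _; rewrite gtn_eqF ?mulr0 // ltn_addr.
have ji_lt : (j - i < m)%N by rewrite (leq_ltn_trans (leq_subr _ _)).
rewrite (bigD1 (Ordinal ji_lt)) //= subnKC // eqxx mulr1 big1 ?addr0 // => k k_neq.
by move: k_neq; rewrite -val_eqE -(eqn_add2l i) subnKC // eq_sym => /negbTE ->; rewrite mulr0.
Qed.

End ShiftMatrix.

Lemma sum_ord_extend (V : nmodType) (f : nat -> V) n1 n2 :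
  (forall m, (n1 <= m < n2)%N -> f m = 0) -> (n1 <= n2)%N ->
  \sum_(m < n1) f m = \sum_(m < n2) f m.
Proof.
move=> f0 le_n12; rewrite -!(big_mkord xpredT) (big_cat_nat (leq0n n1) le_n12) /=.
by rewrite [X in _ = _ + X]big1_seq ?addr0 // => m; rewrite mem_index_iota => /f0.
Qed.

Lemma coef_mul_ps_geom (F : nzRingType) K D (Q : {poly F}) k :
  (size Q <= D)%N -> (k < K)%N ->
  (Q * ps_trunc F K (ps_geom D))`_k =
    \sum_(m < size Q) Q`_m * ((D%:Z %| m%:Z - k%:Z)%Z)%:R.
Proof.
move=> size_le k_lt; pose g m := Q`_m * ((D%:Z %| m%:Z - k%:Z)%Z)%:R.
rewrite coefM (eq_bigr (g \o val)) => [|m _]; last first.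
  rewrite /g coef_poly /ps_geom ifT; last by have := ltn_ord m; lia.
  by rewrite /g /= -opprB subzn ?dvdzE ?abszN -?pmulrn // -ltnS.
have g0_high m : (k.+1 <= m < k.+1 + size Q)%N -> g m = 0.
  case/andP=> k_lt_m _; have [size_le_m|m_lt] := leqP (size Q) m.
    by rewrite /g nth_default ?mul0r.
  by rewrite /g subzn 1?ltnW // dvdzE gtnNdvd ?mulr0 ?subn_gt0 //=; lia.
have g0_size m : (size Q <= m < k.+1 + size Q)%N -> g m = 0.
  by case/andP=> size_le_m _; rewrite /g nth_default ?mul0r.
by rewrite (sum_ord_extend g0_high) ?leq_addr // (sum_ord_extend g0_size) ?leq_addl.
Qed.

Lemma sum_ee_horner (R : realType) (Q : {poly R[i]}) (D : nat) (x : int) : (0 < D)%N ->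
  (D%:R)^-1 * \sum_(1 <= b < D.+1)
      Q.[ee (b%:R / D%:R : R)] * ee ((b%:R / D%:R) * x%:~R : R) =
    \sum_(m < size Q) Q`_m * ((D%:Z %| m%:Z + x)%Z)%:R.
Proof.
move=> D_gt0; have DR : (D%:R : R[i]) != 0 by rewrite pnatr_eq0 -lt0n.
under eq_bigr => b _ do rewrite horner_coef mulr_suml.
rewrite exchange_big mulr_sumr /=; apply: eq_bigr => m _.
have natz_addE : (m%:R + x%:~R : R) = (m%:Z + x)%:~R by rewrite rmorphD.
under eq_bigr => b _ do
  rewrite -mulrA -ee_natmul -eeD [_ * (b%:R / _)]mulrC -mulrDr natz_addE.
by rewrite -mulr_sumr sum_ee_roots // natrM mulrCA (mulrC _ D%:R) mulKf.
Qed.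

Theorem lemma4p2 (R : realType) (a : nat -> nat)
  (ha : forall k : nat, (1 <= k)%N -> (2 <= a k)%N)
  (n : nat) (i j : 'I_(mu a n)) :
  chi (R[i]) a n i j =
    ((dd a n)%:R)^-1 *
    \sum_(1 <= b < (dd a n).+1)
       (pp (R[i]) a n).[ee ((b%:R / (dd a n)%:R) : R)] *
       ee ((b%:R / (dd a n)%:R) * ((i : nat)%:R - (j : nat)%:R) : R).
Proof.
have size_pp := (pp_spec (R[i]) ha n).2.
have mu_gt0 : (0 < mu a n)%N by apply: leq_ltn_trans (ltn_ord i).
have size_le : (size (pp (R[i]) a n) <= dd a n)%N.
  by rewrite -ltnS -size_pp -[X in (X < _)%N]addn0 ltn_add2l.
have -> : ((i : nat)%:R - (j : nat)%:R : R) = ((i : nat)%:Z - (j : nat)%:Z)%:~R.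
  by rewrite rmorphB.
rewrite sum_ee_horner ?dd_gt0 // /chi (shiftN_series_entry (fun k => (inv_phi a n k)%:~R)).
have [i_le_j|j_lt_i] := leqP i j.
  have ji_lt : (j - i < mu a n)%N by rewrite (leq_ltn_trans (leq_subr i j)).
  rewrite (coef_inv_phi _ ha n ji_lt) (coef_mul_ps_geom size_le ji_lt).
  by apply: eq_bigr => m _; rewrite -subzn // opprB.
rewrite big1 // => m _.
have /andP[] : (0 < m + (i - j) < dd a n)%N.
  by move: size_pp (ltn_ord m) (ltn_ord i); set s := size _; lia.
by rewrite subzn ?(ltnW j_lt_i) // -PoszD dvdzE => *; rewrite gtnNdvd ?mulr0.
Qed.
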